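(* Let $\Sigma_2$ be a hyperelliptic curve of genus $2$ given by $y^2=P_5(x)$, with $P_5$ a polynomial of degree $5$. Let $(\lambda_i,x_i,y_i)$, $i=1,\dots,6$, be six points with $y_i^2=P_5(x_i)$, in generic position. Consider the system of six equations in the six unknowns $H=(H_1,\dots,H_6)$ \[ \lambda_i^4+(H_4+x_iH_5+x_i^2H_6)\lambda_i^2+(H_1+x_iH_2+x_i^2H_3)^2=0,\qquad i=1,\dots,6, \] which expresses that the spectral curve of the Hitchin system for $\mathfrak{so}(4)$ on $\Sigma_2$ passes through the six points. Then this system can be reduced to a single polynomial equation of degree $4$ in one unknown. Consequently the system is solvable in radicals, i.e. the Hamiltonians (action coordinates) $H_1,\dots,H_6$ can be expressed in radicals in terms of $\lambda_i,x_i$.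
   Context: For the Hitchin system for the Lie algebra $\mathfrak{so}(4)$ (type $D_2$) on a genus-$2$ hyperelliptic curve $y^2=P_5(x)$, the spectral curve $\det(\lambda-L)=0$ ($L$ the Lax operator) has the explicit form \[ R(\lambda,x,y,H)=\lambda^4+(H_4+xH_5+x^2H_6)\lambda^2+(H_1+xH_2+x^2H_3)^2=0, \] where the two degree-$2$ fundamental invariants of $\mathfrak{so}(4)$ (the quadratic invariant and the Pfaffian) evaluated on $L$ are expanded over the basis $\{1,x,x^2\}$, and the coefficients $H_1,\dots,H_6$ are the Hamiltonians of the system. The phase space is parametrized by $N=\dim\mathfrak{g}\cdot(g-1)=6$ points $(\lambda_i,x_i,y_i)$ on the spectral curve. *)

From HB Require Import structures.
From mathcomp Require Import all_boot all_order all_algebra all_field.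
Set Implicit Arguments. Unset Strict Implicit. Unset Printing Implicit Defensive.
Import GRing.Theory.
Local Open Scope ring_scope.

(* Spectral curve of the so(4) Hitchin system on a genus-2 curve:
   R(lambda, x, H) = lambda^4 + (H4 + x H5 + x^2 H6) lambda^2 + (H1 + x H2 + x^2 H3)^2.
   H : 'I_6 -> L with H 0 = H_1, ..., H 5 = H_6. *)
Definition spectralR (L : ringType) (H : 'I_6 -> L) (lam x : L) : L :=
  lam ^+ 4
  + (H (inord 3) + x * H (inord 4) + x ^+ 2 * H (inord 5)) * lam ^+ 2
  + (H (inord 0) + x * H (inord 1) + x ^+ 2 * H (inord 2)) ^+ 2.

Definition is_solution (L : ringType) (lam x : 'I_6 -> L) (H : 'I_6 -> L) : Prop :=
  forall i : 'I_6, spectralR H (lam i) (x i) = 0.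

Inductive rad_expr (L : fieldType) (ok : nat -> bool) (S : seq L) : L -> Prop :=
| RE_gen z : z \in S -> rad_expr ok S z
| RE_one : rad_expr ok S 1
| RE_add a b : rad_expr ok S a -> rad_expr ok S b -> rad_expr ok S (a + b)
| RE_opp a : rad_expr ok S a -> rad_expr ok S (- a)
| RE_mul a b : rad_expr ok S a -> rad_expr ok S b -> rad_expr ok S (a * b)
| RE_inv a : rad_expr ok S a -> rad_expr ok S a^-1
| RE_root (n : nat) w : ok n -> rad_expr ok S (w ^+ n) -> rad_expr ok S w.

Definition rational_in (L : fieldType) (S : seq L) := rad_expr (fun _ => false) S.
Definition sqrt_expr_in (L : fieldType) (S : seq L) := rad_expr (fun n => n == 2)%N S.
Definition radical_in (L : fieldType) (S : seq L) := rad_expr (fun n => 0 < n)%N S.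

Definition data_seq (L : ringType) (lam x : 'I_6 -> L) : seq L :=
  [seq lam i | i <- enum 'I_6] ++ [seq x i | i <- enum 'I_6].

(* environment for evaluating a genericity polynomial in the 18 variables
   lambda_1..6 ('X_0..'X_5), x_1..6 ('X_6..'X_11), y_1..6 ('X_12..'X_17) *)
Definition point_env (L : ringType) (lam x y : 'I_6 -> L) : seq L :=
  [seq lam i | i <- enum 'I_6] ++ [seq x i | i <- enum 'I_6]
  ++ [seq y i | i <- enum 'I_6].

Definition on_curve (L : ringType) (P5 : {poly L}) (x y : 'I_6 -> L) : Prop :=
  forall i : 'I_6, y i ^+ 2 = P5.[x i].

From Stdlib Require Import ZArith.
From HB Require Import structures.
From mathcomp Require Import all_boot all_order all_algebra all_field.
From mathcomp Require Import ring ssrZ.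
Set Implicit Arguments. Unset Strict Implicit. Unset Printing Implicit Defensive.
Import GRing.Theory.
Local Open Scope ring_scope.

(* Proposition 1.  Write u_i = lambda_i^2, A(z) = H4 + z H5 + z^2 H6 and
   B(z) = H1 + z H2 + z^2 H3; equation i reads u_i^2 + A(x_i) u_i + B(x_i)^2 = 0.
   Combining the equations at the points 0, 1, 2, j with Vandermonde-type
   weights eliminates A and leaves a quadric Q_j(b) = c_j in b = (H1, H2, H3),
   j = 3, 4, 5; eliminating the constants gives forms F, G with F(b) = G(b) = 0
   and Q_3(b) = c_3.  The pencil F + s G is diagonalised by kernel vectors at
   the three roots of the cubic det (F + s G); once one root t is known, the
   other roots, the eigenbasis and b are obtained by square roots.  A follows
   by interpolation at x_0, x_1, x_2, and t is a radical by Cardano's formula.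
   The degree-4 equation of the statement is X det (F + X G). *)

Section RadicalExpressions.
Variables (L : fieldType) (ok : nat -> bool) (S : seq L).
Local Notation E := (rad_expr ok S).

Lemma rad0 : E 0.
Proof. by rewrite -(subrr 1); apply: RE_add; [apply: RE_one | apply: RE_opp; apply: RE_one]. Qed.

Lemma rad_nat n : E n%:R.
Proof.
by elim: n => [|n IH]; [exact: rad0 | rewrite mulrS; apply: RE_add => //; apply: RE_one].
Qed.

Lemma rad_exp a n : E a -> E (a ^+ n).
Proof.
by move=> Ea; elim: n => [|n IH]; [rewrite expr0; apply: RE_one | rewrite exprS; apply: RE_mul].
Qed.

End RadicalExpressions.

Lemma rad_mono (L : fieldType) (ok ok' : nat -> bool) (S S' : seq L) z :
  (forall n, ok n -> ok' n) -> {subset S <= S'} -> rad_expr ok S z -> rad_expr ok' S' z.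
Proof.
move=> hok hS; elim.
- by move=> w /hS; apply: RE_gen.
- exact: RE_one.
- by move=> a b _ Ea _ Eb; apply: RE_add.
- by move=> a _ Ea; apply: RE_opp.
- by move=> a b _ Ea _ Eb; apply: RE_mul.
- by move=> a _ Ea; apply: RE_inv.
- by move=> n w /hok hn _ Ew; apply: (RE_root hn).
Qed.

Lemma rad_subst (L : fieldType) (ok : nat -> bool) (S : seq L) t z :
  rad_expr ok S t -> rad_expr ok (t :: S) z -> rad_expr ok S z.
Proof.
move=> Et; elim.
- by move=> w; rewrite inE => /orP[/eqP -> // | hw]; apply: RE_gen.
- exact: RE_one.
- by move=> a b _ Ea _ Eb; apply: RE_add.
- by move=> a _ Ea; apply: RE_opp.
- by move=> a b _ Ea _ Eb; apply: RE_mul.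
- by move=> a _ Ea; apply: RE_inv.
- by move=> n w hn _ Ew; apply: (RE_root hn).
Qed.

Ltac rad_close := repeat first [ assumption | apply: RE_add | apply: RE_opp
  | apply: RE_mul | apply: RE_inv | apply: rad_exp | apply: rad_nat
  | apply: RE_one | apply: rad0 ].

Lemma closed_sqrt (L : closedFieldType) (d : L) : exists r, r ^+ 2 = d.
Proof.
have /closed_rootP [r] : size ('X^2 - d%:P) != 1%N by rewrite size_XnsubC.
by rewrite /root !hornerE subr_eq0 => /eqP; exists r.
Qed.

Lemma char0_natr_neq0 (R : idomainType) n :
  [pchar R] =i pred0 -> (0 < n)%N -> (n%:R : R) != 0.
Proof. by move=> charR; have /pcharf0P -> := charR; rewrite -lt0n. Qed.

(** Cardano's formulas: the roots of a cubic are radicals in its coefficients. *)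

Section Cardano.
Variables (L : closedFieldType) (S : seq L).
Hypothesis charL : [pchar L] =i pred0.
Local Notation RI := (radical_in S).

Let n_neq0 n : (0 < n)%N -> (n%:R : L) != 0. Proof. exact: char0_natr_neq0. Qed.

(* For y^3 + p y + q = 0, write y = u - p/(3u) with u^2 - y u - p/3 = 0;
   then u^3 is a root of X^2 + q X - p^3/27, whence u and y are radicals. *)
Lemma depressed_cubic_radical (p q y : L) :
  RI p -> RI q -> y ^+ 3 + p * y + q = 0 -> RI y.
Proof.
move=> Ep Eq hy.
have h2 := @n_neq0 2 isT; have h3 := @n_neq0 3 isT.
have h4 := @n_neq0 4 isT; have h27 := @n_neq0 27 isT.
have cube_root w : RI (w ^+ 3) -> RI w := @RE_root _ _ _ 3 w isT.
have [r hr] := closed_sqrt (y ^+ 2 + 4 * p / 3).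
set u := (y + r) / 2.
have hu : u ^+ 2 - y * u - p / 3 = 0.
  have -> : u ^+ 2 - y * u - p / 3 = (r ^+ 2 - (y ^+ 2 + 4 * p / 3)) / 4.
    by rewrite /u; field; rewrite ?h2 ?h3 ?h4.
  by rewrite hr subrr mul0r.
have [u0|u0] := eqVneq u 0.
  have p0 : p = 0.
    have -> : p = 3 * (u ^+ 2 - y * u) - 3 * (u ^+ 2 - y * u - p / 3) by field; rewrite ?h3.
    by rewrite hu u0; ring.
  apply: cube_root; rewrite (_ : y ^+ 3 = - q); first by rad_close.
  by apply/eqP; rewrite -addr_eq0 -[X in _ == X]hy p0 mul0r addr0.
have yu : y = u - p / (3 * u).
  apply/eqP; rewrite -subr_eq0; apply/eqP.
  have -> : y - (u - p / (3 * u)) = - (u ^+ 2 - y * u - p / 3) / u.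
    by field; rewrite ?u0 ?h3.
  by rewrite hu oppr0 mul0r.
have resolvent : (u ^+ 3) ^+ 2 + q * u ^+ 3 - p ^+ 3 / 27 = 0.
  have -> : (u ^+ 3) ^+ 2 + q * u ^+ 3 - p ^+ 3 / 27 =
    u ^+ 3 * ((u - p / (3 * u)) ^+ 3 + p * (u - p / (3 * u)) + q).
    by field; rewrite ?u0 ?h3 ?h27.
  by rewrite -yu hy mulr0.
set s := 2 * u ^+ 3 + q.
have Es : RI s.
  apply: (@RE_root _ _ _ 2 _ isT); rewrite (_ : s ^+ 2 = q ^+ 2 + 4 * p ^+ 3 / 27).
    by rad_close.
  apply/eqP; rewrite -subr_eq0; apply/eqP.
  have -> : s ^+ 2 - (q ^+ 2 + 4 * p ^+ 3 / 27) =
            4 * ((u ^+ 3) ^+ 2 + q * u ^+ 3 - p ^+ 3 / 27) by rewrite /s; field; rewrite ?h27.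
  by rewrite resolvent mulr0.
have Eu : RI u.
  by apply: cube_root; rewrite (_ : u ^+ 3 = (s - q) / 2); [rad_close | rewrite /s; field].
by rewrite yu; rad_close.
Qed.

(* The general cubic reduces to the depressed one by y = t + b/(3a). *)
Lemma cubic_radical (a b c d t : L) : a != 0 -> RI a -> RI b -> RI c -> RI d ->
  a * t ^+ 3 + b * t ^+ 2 + c * t + d = 0 -> RI t.
Proof.
move=> ha Ea Eb Ec Ed ht.
have h3 := @n_neq0 3 isT; have h27 := @n_neq0 27 isT.
set p := (3 * a * c - b ^+ 2) / (3 * a ^+ 2).
set q := (2 * b ^+ 3 - 9 * a * b * c + 27 * a ^+ 2 * d) / (27 * a ^+ 3).
have hy : (t + b / (3 * a)) ^+ 3 + p * (t + b / (3 * a)) + q = 0.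
  have : a * ((t + b / (3 * a)) ^+ 3 + p * (t + b / (3 * a)) + q) =
         a * t ^+ 3 + b * t ^+ 2 + c * t + d by rewrite /p /q; field; rewrite ?ha ?h3 ?h27.
  by rewrite ht => /eqP; rewrite mulf_eq0 (negbTE ha) => /eqP.
have Ey : RI (t + b / (3 * a)) by apply: (depressed_cubic_radical _ _ hy); rewrite /p /q; rad_close.
by rewrite (_ : t = t + b / (3 * a) - b / (3 * a)); [rad_close | ring].
Qed.

End Cardano.

(** Polynomial formulas over an abstract ring signature.  A formula written
    once over [ring_ops] can be read in a ring ([value_ops]), as a syntactic
    term ([term_ops]) or in any other model; maps commuting with the
    signature commute with every such formula. *)

Record ring_ops (T : Type) := RingOps {
  op_add : T -> T -> T; op_mul : T -> T -> T; op_opp : T -> T;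
  op_nat : nat -> T; op_exp : T -> nat -> T }.

Definition value_ops (R : pzRingType) : ring_ops R :=
  RingOps (fun a b : R => a + b) (fun a b => a * b) (fun a => - a)
    (fun n => n%:R) (fun a n => a ^+ n).

Definition term_ops (R : Type) : ring_ops (GRing.term R) :=
  RingOps (@GRing.Add R) (@GRing.Mul R) (@GRing.Opp R) (@GRing.NatConst R) (@GRing.Exp R).

Record ops_morph (T T' : Type) (o : ring_ops T) (o' : ring_ops T') (phi : T -> T') :
    Prop := OpsMorph {
  morph_add : forall a b, phi (op_add o a b) = op_add o' (phi a) (phi b);
  morph_mul : forall a b, phi (op_mul o a b) = op_mul o' (phi a) (phi b);
  morph_opp : forall a, phi (op_opp o a) = op_opp o' (phi a);
  morph_nat : forall n, phi (op_nat o n) = op_nat o' n;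
  morph_exp : forall a n, phi (op_exp o a n) = op_exp o' (phi a) n }.

Lemma rmorph_ops_morph (R R' : pzRingType) (f : {rmorphism R -> R'}) :
  ops_morph (value_ops R) (value_ops R') f.
Proof.
by split=> /= *; rewrite ?rmorphD ?rmorphM ?rmorphN ?rmorph_nat ?rmorphXn.
Qed.

Lemma eval_ops_morph (R : unitRingType) (e : seq R) :
  ops_morph (term_ops R) (value_ops R) (GRing.eval e).
Proof. by []. Qed.

Section TernaryFormulas.
Variables (T : Type) (o : ring_ops T).
Local Notation "a + b" := (op_add o a b).
Local Notation "a * b" := (op_mul o a b).
Local Notation "- a" := (op_opp o a).
Local Notation "a - b" := (op_add o a (op_opp o b)).
Local Notation "a ^+ n" := (op_exp o a n).
Local Notation "n %:R" := (op_nat o n).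

Definition gdet a00 a01 a02 a11 a12 a22 :=
  a00 * (a11 * a22 - a12 ^+ 2) - a01 * (a01 * a22 - a12 * a02)
  + a02 * (a01 * a12 - a11 * a02).

(* tr (adj A * G) for symmetric A and G: the derivative of det (A + s G) at 0 *)
Definition gtr_adj a00 a01 a02 a11 a12 a22 g00 g01 g02 g11 g12 g22 :=
  (a11 * a22 - a12 ^+ 2) * g00 + 2%:R * (a02 * a12 - a01 * a22) * g01
  + 2%:R * (a01 * a12 - a02 * a11) * g02 + (a00 * a22 - a02 ^+ 2) * g11
  + 2%:R * (a01 * a02 - a00 * a12) * g12 + (a00 * a11 - a01 ^+ 2) * g22.

(* discriminant of the cubic a0 + a1 s + a2 s^2 + a3 s^3 *)
Definition gdisc a0 a1 a2 a3 :=
  a2 ^+ 2 * a1 ^+ 2 - 4%:R * a3 * a1 ^+ 3 - 4%:R * a2 ^+ 3 * a0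
  - 27%:R * a3 ^+ 2 * a0 ^+ 2 + 18%:R * a3 * a2 * a1 * a0.

End TernaryFormulas.

Section TernaryFormulasTransfer.
Variables (T T' : Type) (o : ring_ops T) (o' : ring_ops T') (phi : T -> T').
Hypothesis hphi : ops_morph o o' phi.

Ltac push := rewrite ?(morph_add hphi, morph_mul hphi, morph_opp hphi,
  morph_nat hphi, morph_exp hphi).

Lemma morph_gdet a00 a01 a02 a11 a12 a22 :
  phi (gdet o a00 a01 a02 a11 a12 a22) =
  gdet o' (phi a00) (phi a01) (phi a02) (phi a11) (phi a12) (phi a22).
Proof. by rewrite /gdet; push. Qed.

Lemma morph_gtr_adj a00 a01 a02 a11 a12 a22 g00 g01 g02 g11 g12 g22 :
  phi (gtr_adj o a00 a01 a02 a11 a12 a22 g00 g01 g02 g11 g12 g22) =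
  gtr_adj o' (phi a00) (phi a01) (phi a02) (phi a11) (phi a12) (phi a22)
             (phi g00) (phi g01) (phi g02) (phi g11) (phi g12) (phi g22).
Proof. by rewrite /gtr_adj; push. Qed.

Lemma morph_gdisc a0 a1 a2 a3 :
  phi (gdisc o a0 a1 a2 a3) = gdisc o' (phi a0) (phi a1) (phi a2) (phi a3).
Proof. by rewrite /gdisc; push. Qed.

End TernaryFormulasTransfer.

Record vec3 (L : Type) := Vec3 { c0 : L; c1 : L; c2 : L }.
Record sym3 (L : Type) := Sym3 { s00 : L; s01 : L; s02 : L; s11 : L; s12 : L; s22 : L }.

Section TernaryForms.
Variable L : fieldType.
Implicit Types (M F G : sym3 L) (u v w k : vec3 L).

Definition bform M v w : L :=
  s00 M * c0 v * c0 w + s01 M * (c0 v * c1 w + c1 v * c0 w)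
  + s02 M * (c0 v * c2 w + c2 v * c0 w) + s11 M * c1 v * c1 w
  + s12 M * (c1 v * c2 w + c2 v * c1 w) + s22 M * c2 v * c2 w.
Definition mulv M v : vec3 L :=
  Vec3 (s00 M * c0 v + s01 M * c1 v + s02 M * c2 v)
       (s01 M * c0 v + s11 M * c1 v + s12 M * c2 v)
       (s02 M * c0 v + s12 M * c1 v + s22 M * c2 v).
Definition dot v w := c0 v * c0 w + c1 v * c1 w + c2 v * c2 w.
Definition zero3 : vec3 L := Vec3 0 0 0.

Definition det3 M := gdet (value_ops L) (s00 M) (s01 M) (s02 M) (s11 M) (s12 M) (s22 M).
Definition tr_adj M G :=
  gtr_adj (value_ops L) (s00 M) (s01 M) (s02 M) (s11 M) (s12 M) (s22 M)
                        (s00 G) (s01 G) (s02 G) (s11 G) (s12 G) (s22 G).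

Definition pencil F G (s : L) : sym3 L :=
  Sym3 (s00 F + s * s00 G) (s01 F + s * s01 G) (s02 F + s * s02 G)
       (s11 F + s * s11 G) (s12 F + s * s12 G) (s22 F + s * s22 G).

Definition adj00 M := s11 M * s22 M - s12 M ^+ 2.
Definition adj01 M := s02 M * s12 M - s01 M * s22 M.
Definition adj02 M := s01 M * s12 M - s02 M * s11 M.
Definition adj11 M := s00 M * s22 M - s02 M ^+ 2.
Definition adj12 M := s01 M * s02 M - s00 M * s12 M.
Definition adj22 M := s00 M * s11 M - s01 M ^+ 2.
Definition adj_col0 M := Vec3 (adj00 M) (adj01 M) (adj02 M).
Definition adj_col1 M := Vec3 (adj01 M) (adj11 M) (adj12 M).
Definition adj_col2 M := Vec3 (adj02 M) (adj12 M) (adj22 M).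

Lemma bform_dot M v w : bform M v w = dot v (mulv M w).
Proof. by rewrite /bform /dot /=; ring. Qed.

Lemma bformC M v w : bform M v w = bform M w v.
Proof. by rewrite /bform; ring. Qed.

Lemma dot_mulv M v w : dot (mulv M v) w = bform M w v.
Proof. by rewrite bform_dot /dot /mulv /=; ring. Qed.

Lemma bform_pencil F G s v w : bform (pencil F G s) v w = bform F v w + s * bform G v w.
Proof. by rewrite /bform /pencil /=; ring. Qed.

Lemma det_pencil F G s : det3 (pencil F G s) =
  det3 F + tr_adj F G * s + tr_adj G F * s ^+ 2 + det3 G * s ^+ 3.
Proof. by rewrite /det3 /tr_adj /gdet /gtr_adj /pencil /=; ring. Qed.

Lemma tr_adj_pencil F G s : tr_adj (pencil F G s) G =
  tr_adj F G + 2 * tr_adj G F * s + 3 * det3 G * s ^+ 2.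
Proof. by rewrite /det3 /tr_adj /gdet /gtr_adj /pencil /=; ring. Qed.

(** A singular M has a kernel vector among the columns of its adjugate; if
    moreover tr (adj M G) != 0 one of them is anisotropic for G.  The
    identities below say M adj M = det M and that the 2x2 minors of adj M
    are multiples of det M. *)

Lemma mulv_adj_col0 M : mulv M (adj_col0 M) = Vec3 (det3 M) 0 0.
Proof. by rewrite /mulv /det3 /gdet /adj_col0 /adj00 /adj01 /adj02 /=; congr Vec3; ring. Qed.
Lemma mulv_adj_col1 M : mulv M (adj_col1 M) = Vec3 0 (det3 M) 0.
Proof. by rewrite /mulv /det3 /gdet /adj_col1 /adj01 /adj11 /adj12 /=; congr Vec3; ring. Qed.
Lemma mulv_adj_col2 M : mulv M (adj_col2 M) = Vec3 0 0 (det3 M).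
Proof. by rewrite /mulv /det3 /gdet /adj_col2 /adj02 /adj12 /adj22 /=; congr Vec3; ring. Qed.

Lemma adj_minors_diag M :
  [/\ adj00 M * adj11 M - adj01 M ^+ 2 = det3 M * s22 M,
      adj00 M * adj22 M - adj02 M ^+ 2 = det3 M * s11 M
    & adj11 M * adj22 M - adj12 M ^+ 2 = det3 M * s00 M].
Proof. by rewrite /det3 /gdet /adj00 /adj01 /adj02 /adj11 /adj12 /adj22 /=; split; ring. Qed.

Lemma adj_minors_off M :
  [/\ adj00 M * adj12 M - adj01 M * adj02 M = - (det3 M * s12 M),
      adj11 M * adj02 M - adj01 M * adj12 M = - (det3 M * s02 M)
    & adj22 M * adj01 M - adj02 M * adj12 M = - (det3 M * s01 M)].
Proof. by rewrite /det3 /gdet /adj00 /adj01 /adj02 /adj11 /adj12 /adj22 /=; split; ring. Qed.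

Lemma tr_adjE M G : tr_adj M G =
  adj00 M * s00 G + 2 * adj01 M * s01 G + 2 * adj02 M * s02 G
  + adj11 M * s11 G + 2 * adj12 M * s12 G + adj22 M * s22 G.
Proof. by rewrite /tr_adj /gtr_adj /adj00 /adj01 /adj02 /adj11 /adj12 /adj22 /=; ring. Qed.

Lemma kernel_vector M G : det3 M = 0 -> tr_adj M G != 0 ->
  exists k, [/\ k = adj_col0 M \/ k = adj_col1 M \/ k = adj_col2 M,
            mulv M k = zero3 & bform G k k != 0].
Proof.
move=> hd htr.
have [m01 m02 m12] := adj_minors_diag M; have [j0 j1 j2] := adj_minors_off M.
rewrite hd !mul0r oppr0 in m01 m02 m12 j0 j1 j2.
have sq0 (z : L) : z ^+ 2 = 0 -> z = 0 by move/eqP; rewrite expf_eq0 => /andP[_ /eqP].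
have [h0|h0] := eqVneq (adj00 M) 0; last first.
  exists (adj_col0 M); split; [by left | by rewrite mulv_adj_col0 hd |].
  have -> : bform G (adj_col0 M) (adj_col0 M) = adj00 M * tr_adj M G -
      (s11 G * (adj00 M * adj11 M - adj01 M ^+ 2) + s22 G * (adj00 M * adj22 M - adj02 M ^+ 2)
       + 2 * s12 G * (adj00 M * adj12 M - adj01 M * adj02 M)) by rewrite tr_adjE /bform /=; ring.
  by rewrite m01 m02 j0 !mulr0 !addr0 subr0 mulf_neq0.
have [h1|h1] := eqVneq (adj11 M) 0; last first.
  exists (adj_col1 M); split; [by right; left | by rewrite mulv_adj_col1 hd |].
  have -> : bform G (adj_col1 M) (adj_col1 M) = adj11 M * tr_adj M G -
      (s00 G * (adj00 M * adj11 M - adj01 M ^+ 2) + s22 G * (adj11 M * adj22 M - adj12 M ^+ 2)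
       + 2 * s02 G * (adj11 M * adj02 M - adj01 M * adj12 M)) by rewrite tr_adjE /bform /=; ring.
  by rewrite m01 m12 j1 !mulr0 !addr0 subr0 mulf_neq0.
have [h2|h2] := eqVneq (adj22 M) 0; last first.
  exists (adj_col2 M); split; [by right; right | by rewrite mulv_adj_col2 hd |].
  have -> : bform G (adj_col2 M) (adj_col2 M) = adj22 M * tr_adj M G -
      (s00 G * (adj00 M * adj22 M - adj02 M ^+ 2) + s11 G * (adj11 M * adj22 M - adj12 M ^+ 2)
       + 2 * s01 G * (adj22 M * adj01 M - adj02 M * adj12 M)) by rewrite tr_adjE /bform /=; ring.
  by rewrite m02 m12 j2 !mulr0 !addr0 subr0 mulf_neq0.
(* adj M = 0 would force tr (adj M G) = 0 *)
have e01 : adj01 M = 0 by apply: sq0; apply/eqP; rewrite -oppr_eq0 -m01 h0 mul0r sub0r.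
have e02 : adj02 M = 0 by apply: sq0; apply/eqP; rewrite -oppr_eq0 -m02 h0 mul0r sub0r.
have e12 : adj12 M = 0 by apply: sq0; apply/eqP; rewrite -oppr_eq0 -m12 h1 mul0r sub0r.
by move: htr; rewrite tr_adjE h0 h1 h2 e01 e02 e12 !(mulr0, mul0r, addr0) eqxx.
Qed.

Lemma pencil_kernel_self F G s k : mulv (pencil F G s) k = zero3 ->
  bform F k k = - (s * bform G k k).
Proof.
move=> hk; have : bform (pencil F G s) k k = 0 by rewrite bform_dot hk /dot /=; ring.
by rewrite bform_pencil => /eqP; rewrite addr_eq0 => /eqP.
Qed.

Lemma pencil_kernel_orth F G s s' k k' :
  mulv (pencil F G s) k = zero3 -> mulv (pencil F G s') k' = zero3 -> s != s' ->
  bform G k k' = 0 /\ bform F k k' = 0.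
Proof.
move=> hk hk' ss'.
have e : bform (pencil F G s) k' k = 0 by rewrite bform_dot hk /dot /=; ring.
have e' : bform (pencil F G s') k k' = 0 by rewrite bform_dot hk' /dot /=; ring.
rewrite !bform_pencil (bformC F k' k) (bformC G k' k) in e e'.
have hG : bform G k k' = 0.
  have : (s - s') * bform G k k' = 0.
    have -> : (s - s') * bform G k k' =
      (bform F k k' + s * bform G k k') - (bform F k k' + s' * bform G k k') by ring.
    by rewrite e e' subr0.
  by move/eqP; rewrite mulf_eq0 subr_eq0 (negbTE ss') => /eqP.
by split=> //; move: e'; rewrite hG mulr0 addr0.
Qed.

Definition tdet u v w :=
  c0 u * (c1 v * c2 w - c2 v * c1 w) - c1 u * (c0 v * c2 w - c2 v * c0 w)
  + c2 u * (c0 v * c1 w - c1 v * c0 w).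

Definition lin3 (a1 a2 a3 : L) k1 k2 k3 :=
  Vec3 (a1 * c0 k1 + a2 * c0 k2 + a3 * c0 k3)
       (a1 * c1 k1 + a2 * c1 k2 + a3 * c1 k3)
       (a1 * c2 k1 + a2 * c2 k2 + a3 * c2 k3).

Lemma bform_lin3 M a1 a2 a3 k1 k2 k3 :
  bform M (lin3 a1 a2 a3 k1 k2 k3) (lin3 a1 a2 a3 k1 k2 k3) =
  a1 ^+ 2 * bform M k1 k1 + a2 ^+ 2 * bform M k2 k2 + a3 ^+ 2 * bform M k3 k3
  + 2 * a1 * a2 * bform M k1 k2 + 2 * a1 * a3 * bform M k1 k3
  + 2 * a2 * a3 * bform M k2 k3.
Proof. by rewrite /bform /lin3 /=; ring. Qed.

Lemma bform_lin3_r M k a1 a2 a3 k1 k2 k3 : bform M k (lin3 a1 a2 a3 k1 k2 k3) =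
  a1 * bform M k k1 + a2 * bform M k k2 + a3 * bform M k k3.
Proof. by rewrite /bform /lin3 /=; ring. Qed.

Definition subv u v := Vec3 (c0 u - c0 v) (c1 u - c1 v) (c2 u - c2 v).

Lemma bform_subv M k u v : bform M k (subv u v) = bform M k u - bform M k v.
Proof. by rewrite /bform /subv /=; ring. Qed.

Lemma tdet_mul u1 u2 u3 k1 k2 k3 :
  tdet u1 u2 u3 * tdet k1 k2 k3 =
  tdet (Vec3 (dot u1 k1) (dot u1 k2) (dot u1 k3))
       (Vec3 (dot u2 k1) (dot u2 k2) (dot u2 k3))
       (Vec3 (dot u3 k1) (dot u3 k2) (dot u3 k3)).
Proof. by rewrite /tdet /dot /=; ring. Qed.

Lemma tdet_orth_eq0 u1 u2 u3 v : tdet u1 u2 u3 != 0 ->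
  dot u1 v = 0 -> dot u2 v = 0 -> dot u3 v = 0 -> v = zero3.
Proof.
move=> hd h1 h2 h3.
have cramer0 : tdet u1 u2 u3 * c0 v = (c1 u2 * c2 u3 - c2 u2 * c1 u3) * dot u1 v
  + (c1 u3 * c2 u1 - c2 u3 * c1 u1) * dot u2 v + (c1 u1 * c2 u2 - c2 u1 * c1 u2) * dot u3 v.
  by rewrite /tdet /dot; ring.
have cramer1 : tdet u1 u2 u3 * c1 v = (c2 u2 * c0 u3 - c0 u2 * c2 u3) * dot u1 v
  + (c2 u3 * c0 u1 - c0 u3 * c2 u1) * dot u2 v + (c2 u1 * c0 u2 - c0 u1 * c2 u2) * dot u3 v.
  by rewrite /tdet /dot; ring.
have cramer2 : tdet u1 u2 u3 * c2 v = (c0 u2 * c1 u3 - c1 u2 * c0 u3) * dot u1 v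
  + (c0 u3 * c1 u1 - c1 u3 * c0 u1) * dot u2 v + (c0 u1 * c1 u2 - c1 u1 * c0 u2) * dot u3 v.
  by rewrite /tdet /dot; ring.
rewrite h1 h2 h3 !mulr0 !addr0 in cramer0 cramer1 cramer2.
move/eqP: cramer0; move/eqP: cramer1; move/eqP: cramer2.
by rewrite !mulf_eq0 (negbTE hd) /=; case: v {h1 h2 h3} => ??? /= /eqP-> /eqP-> /eqP->.
Qed.

Lemma orthogonal_expansion G k1 k2 k3 b :
  bform G k1 k2 = 0 -> bform G k1 k3 = 0 -> bform G k2 k3 = 0 ->
  bform G k1 k1 != 0 -> bform G k2 k2 != 0 -> bform G k3 k3 != 0 ->
  b = lin3 (bform G k1 b / bform G k1 k1) (bform G k2 b / bform G k2 k2)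
           (bform G k3 b / bform G k3 k3) k1 k2 k3.
Proof.
move=> o12 o13 o23 g1 g2 g3.
have indep : tdet (mulv G k1) (mulv G k2) (mulv G k3) != 0.
  apply: contraNneq (mulf_neq0 (mulf_neq0 g1 g2) g3) => h0.
  have := tdet_mul (mulv G k1) (mulv G k2) (mulv G k3) k1 k2 k3.
  rewrite h0 mul0r !dot_mulv (bformC G k2 k1) (bformC G k3 k1) (bformC G k3 k2) o12 o13 o23.
  by rewrite /tdet /= => ->; apply/eqP; ring.
set l := lin3 _ _ _ k1 k2 k3.
have diff_eq0 : subv b l = zero3.
  apply: (tdet_orth_eq0 indep); rewrite dot_mulv bformC bform_subv /l bform_lin3_r.
  - by rewrite o12 o13; field; rewrite ?g1 ?g2 ?g3.
  - by rewrite (bformC G k2 k1) o12 o23; field; rewrite ?g1 ?g2 ?g3.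
  - by rewrite (bformC G k3 k1) (bformC G k3 k2) o13 o23; field; rewrite ?g1 ?g2 ?g3.
case: b l diff_eq0 => b0 b1 b2 [l0 l1 l2] [] /eqP; rewrite subr_eq0 => /eqP-> /eqP.
by rewrite subr_eq0 => /eqP-> /eqP; rewrite subr_eq0 => /eqP->.
Qed.

Lemma two_relations (T1 T2 T3 z1 z2 z3 : L) : T2 != T3 ->
  z1 + z2 + z3 = 0 -> T1 * z1 + T2 * z2 + T3 * z3 = 0 ->
  exists rho, [/\ z1 = rho * (T2 - T3), z2 = rho * (T3 - T1) & z3 = rho * (T1 - T2)].
Proof.
move=> n23 hs hw; have d23 : T2 - T3 != 0 by rewrite subr_eq0.
exists (z1 / (T2 - T3)).
have e2 : (T2 - T3) * z2 = (T3 - T1) * z1.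
  apply/eqP; rewrite -subr_eq0; apply/eqP.
  have -> : (T2 - T3) * z2 - (T3 - T1) * z1 =
    (T1 * z1 + T2 * z2 + T3 * z3) - T3 * (z1 + z2 + z3) by ring.
  by rewrite hw hs mulr0 subr0.
split; first by field.
- by apply: (mulfI d23); rewrite e2; field.
- apply: (mulfI d23); rewrite (_ : z3 = (z1 + z2 + z3) - z1 - z2); last by ring.
  by rewrite hs mulrBr e2; field.
Qed.

End TernaryForms.

Arguments zero3 {L}.

Definition disc3 (L : pzRingType) (a0 a1 a2 a3 : L) := gdisc (value_ops L) a0 a1 a2 a3.

Lemma disc3_vieta (L : comPzRingType) (a T1 T2 T3 : L) :
  disc3 (- (a * T1 * T2 * T3)) (a * (T1 * T2 + T1 * T3 + T2 * T3))
        (- (a * (T1 + T2 + T3))) a =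
  a ^+ 4 * ((T1 - T2) * (T1 - T3) * (T2 - T3)) ^+ 2.
Proof. by rewrite /disc3 /gdisc /=; ring. Qed.

Section PencilInRadicals.
Variables (L : closedFieldType) (ok : nat -> bool) (S : seq L).
Hypotheses (ok2 : ok 2%N) (two_neq0 : (2 : L) != 0).
Local Notation E := (rad_expr ok S).
Implicit Types (M F G Q : sym3 L) (v k b : vec3 L).

Let rad_sqrt w : E (w ^+ 2) -> E w. Proof. exact: RE_root ok2. Qed.

Definition vec_in v := [/\ E (c0 v), E (c1 v) & E (c2 v)].
Definition sym_in M :=
  E (s00 M) /\ E (s01 M) /\ E (s02 M) /\ E (s11 M) /\ E (s12 M) /\ E (s22 M).

Lemma bform_in M v w : sym_in M -> vec_in v -> vec_in w -> E (bform M v w).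
Proof.
case: M v w => ?????? [???] [???] [?[?[?[?[??]]]]] [???] [???].
by rewrite /bform /=; rad_close.
Qed.

Lemma pencil_in F G s : sym_in F -> sym_in G -> E s -> sym_in (pencil F G s).
Proof.
case: F G => ?????? [??????] [?[?[?[?[??]]]]] [?[?[?[?[??]]]]] ?.
by rewrite /sym_in /pencil /=; do !split; rad_close.
Qed.

Lemma det3_in M : sym_in M -> E (det3 M).
Proof. by case: M => ?????? [?[?[?[?[??]]]]]; rewrite /det3 /gdet /=; rad_close. Qed.

Lemma tr_adj_in M G : sym_in M -> sym_in G -> E (tr_adj M G).
Proof.
case: M G => ?????? [??????] [?[?[?[?[??]]]]] [?[?[?[?[??]]]]].
by rewrite /tr_adj /gtr_adj /=; rad_close.
Qed.

Lemma kernel_vector_in M G : sym_in M -> det3 M = 0 -> tr_adj M G != 0 ->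
  exists k, [/\ vec_in k, mulv M k = zero3 & bform G k k != 0].
Proof.
move=> EM hd ht; have [k [hk h1 h2]] := kernel_vector hd ht.
exists k; split=> //; case: M EM hk {hd ht h1 h2} => ?????? [?[?[?[?[??]]]]].
by case=> [->|[->|->]]; rewrite /vec_in /adj_col0 /adj_col1 /adj_col2
  /adj00 /adj01 /adj02 /adj11 /adj12 /adj22 /=; split; rad_close.
Qed.

Lemma cubic_other_roots (a a0 a1 a2 t : L) : a != 0 -> E a -> E a1 -> E a2 -> E t ->
  a0 + a1 * t + a2 * t ^+ 2 + a * t ^+ 3 = 0 ->
  exists T2 T3, [/\ E T2, E T3, a2 = - (a * (t + T2 + T3)),
    a1 = a * (t * T2 + t * T3 + T2 * T3) & a0 = - (a * t * T2 * T3)].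
Proof.
move=> ha Ea Ea1 Ea2 Et ht.
have h4 : (4 : L) != 0 by rewrite (_ : 4 = 2 * 2 :> L) ?mulf_neq0 //; ring.
set B := a2 + a * t; set C := a1 + a2 * t + a * t ^+ 2.
have [r hr] := closed_sqrt (B ^+ 2 - 4 * a * C).
have Er : E r by apply: rad_sqrt; rewrite hr /B /C; rad_close.
set T2 := (r - B) / (2 * a); set T3 := (- r - B) / (2 * a).
have sum : a * (T2 + T3) = - B by rewrite /T2 /T3; field; rewrite ha two_neq0.
have prod : a * (T2 * T3) = C.
  have -> : a * (T2 * T3) = (B ^+ 2 - r ^+ 2) / (4 * a).
    by rewrite /T2 /T3; field; rewrite ?ha ?two_neq0 ?h4.
  by rewrite hr; field; rewrite ?ha ?h4.
exists T2, T3; split; try by rewrite /T2 /T3 /B; rad_close.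
- have -> : a * (t + T2 + T3) = a * t + a * (T2 + T3) by ring.
  by rewrite sum /B; ring.
- have -> : a * (t * T2 + t * T3 + T2 * T3) = t * (a * (T2 + T3)) + a * (T2 * T3) by ring.
  by rewrite sum prod /B /C; ring.
- have -> : a * t * T2 * T3 = t * (a * (T2 * T3)) by ring.
  by rewrite prod; apply/eqP; rewrite -addr_eq0; apply/eqP; rewrite -ht /C; ring.
Qed.

Definition eigen_at F G (T : L) k :=
  [/\ vec_in k, mulv (pencil F G T) k = zero3 & bform G k k != 0].

(* If det (F + s G) = det G (s - T1)(s - T2)(s - T3) with distinct T_i, then
   tr (adj (F + T_i G) G), the derivative at T_i, is nonzero, which gives a
   kernel vector at each root. *)
Lemma pencil_eigenvectors F G (T1 T2 T3 : L) : sym_in F -> sym_in G ->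
  E T1 -> E T2 -> E T3 -> det3 G != 0 -> T1 != T2 -> T1 != T3 -> T2 != T3 ->
  tr_adj G F = - (det3 G * (T1 + T2 + T3)) ->
  tr_adj F G = det3 G * (T1 * T2 + T1 * T3 + T2 * T3) ->
  det3 F = - (det3 G * T1 * T2 * T3) ->
  exists k1 k2 k3, [/\ eigen_at F G T1 k1, eigen_at F G T2 k2 & eigen_at F G T3 k3].
Proof.
move=> EF EG ET1 ET2 ET3 ha n12 n13 n23 v2 v1 v0.
have sub_neq0 x y : x != y -> x - y != 0 by rewrite subr_eq0.
have eigen T T' T'' : E T -> T != T' -> T != T'' ->
    det3 (pencil F G T) = 0 -> tr_adj (pencil F G T) G = det3 G * ((T - T') * (T - T'')) ->
    exists k, eigen_at F G T k.
  move=> ET nT' nT'' hd ht; apply: (kernel_vector_in (pencil_in EF EG ET) hd).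
  by rewrite ht !mulf_neq0 ?sub_neq0.
have [k1 hk1] : exists k, eigen_at F G T1 k.
  by apply: (eigen T1 T2 T3 ET1 n12 n13); rewrite ?det_pencil ?tr_adj_pencil ?v0 ?v1 ?v2; ring.
have [k2 hk2] : exists k, eigen_at F G T2 k.
  by apply: (eigen T2 T1 T3 ET2 _ n23);
    rewrite 1?eq_sym // ?det_pencil ?tr_adj_pencil ?v0 ?v1 ?v2; ring.
have [k3 hk3] : exists k, eigen_at F G T3 k.
  by apply: (eigen T3 T1 T2 ET3);
    rewrite 1?eq_sym // ?det_pencil ?tr_adj_pencil ?v0 ?v1 ?v2; ring.
by exists k1, k2, k3.
Qed.

Definition scalev (r : L) v := Vec3 (r * c0 v) (r * c1 v) (r * c2 v).

(* If b = sum beta_i k_i in a basis of eigenvectors in E, with the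
   beta_i^2 G(k_i, k_i) proportional to elements of E and Q(b) = c != 0 in E,
   then b is in E: b / sqrt(rho) is in E, and so is rho = c / Q(b / sqrt rho). *)
Lemma eigen_combination_in G Q (k1 k2 k3 : vec3 L) (d1 d2 d3 be1 be2 be3 rho c : L) :
  sym_in G -> sym_in Q -> vec_in k1 -> vec_in k2 -> vec_in k3 ->
  E d1 -> E d2 -> E d3 -> E c -> c != 0 ->
  bform G k1 k1 != 0 -> bform G k2 k2 != 0 -> bform G k3 k3 != 0 ->
  be1 ^+ 2 * bform G k1 k1 = rho * d1 -> be2 ^+ 2 * bform G k2 k2 = rho * d2 ->
  be3 ^+ 2 * bform G k3 k3 = rho * d3 ->
  bform Q (lin3 be1 be2 be3 k1 k2 k3) (lin3 be1 be2 be3 k1 k2 k3) = c ->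
  vec_in (lin3 be1 be2 be3 k1 k2 k3).
Proof.
move=> EG EQ Ek1 Ek2 Ek3 Ed1 Ed2 Ed3 Ec c0 g1 g2 g3 z1 z2 z3 hQ.
have sq_coef be y d : y != 0 -> be ^+ 2 * y = rho * d -> be ^+ 2 = rho * d / y.
  by move=> hy <-; field.
have rho0 : rho != 0.
  apply: contraNneq c0 => r0; apply/eqP; rewrite -hQ.
  have be0 be y d : y != 0 -> be ^+ 2 * y = rho * d -> be = 0.
    by move=> hy /(sq_coef _ _ _ hy); rewrite r0 !mul0r => /eqP; rewrite expf_eq0 => /andP[_ /eqP].
  rewrite (be0 _ _ _ g1 z1) (be0 _ _ _ g2 z2) (be0 _ _ _ g3 z3) /bform /lin3 /=; ring.
have [r hr] := closed_sqrt rho.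
have r0 : r != 0 by apply: contraNneq rho0 => r0; rewrite -hr r0 expr0n.
have coef_in be y d : E y -> y != 0 -> be ^+ 2 * y = rho * d -> E d -> E (be / r).
  move=> Ey hy hz Ed; apply: rad_sqrt.
  rewrite expr_div_n hr (sq_coef _ _ _ hy hz) (_ : rho * d / y / rho = d / y).
    by rad_close.
  by field; rewrite ?rho0 ?hy.
set v := lin3 (be1 / r) (be2 / r) (be3 / r) k1 k2 k3.
have Ev : vec_in v.
  have Eb1 := coef_in _ _ _ (bform_in EG Ek1 Ek1) g1 z1 Ed1.
  have Eb2 := coef_in _ _ _ (bform_in EG Ek2 Ek2) g2 z2 Ed2.
  have Eb3 := coef_in _ _ _ (bform_in EG Ek3 Ek3) g3 z3 Ed3.
  by case: Ek1 Ek2 Ek3 => ??? [???] [???]; rewrite /v /lin3 /vec_in /=; split; rad_close.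
have hb : lin3 be1 be2 be3 k1 k2 k3 = scalev r v.
  by rewrite /v /lin3 /scalev /=; congr Vec3; field; rewrite ?r0.
have hQv : r ^+ 2 * bform Q v v = c by rewrite -hQ hb /bform /scalev /=; ring.
have Er : E r.
  apply: rad_sqrt; rewrite (_ : r ^+ 2 = c / bform Q v v).
    by have EQv := bform_in EQ Ev Ev; rad_close.
  have Qv0 : bform Q v v != 0 by apply: contraNneq c0 => h; rewrite -hQv h mulr0.
  by rewrite -hQv; field; rewrite ?Qv0.
by rewrite hb; case: Ev => ???; rewrite /vec_in /scalev /=; split; rad_close.
Qed.

(* The pencil lemma.  In the eigenbasis k_i of the roots t, T2, T3, the two
   equations F(b) = G(b) = 0 say that the z_i = beta_i^2 G(k_i, k_i) satisfy
   sum z_i = 0 and t z_1 + T2 z_2 + T3 z_3 = 0. *)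
Lemma common_null_vector_in F G Q (c t : L) b :
  sym_in F -> sym_in G -> sym_in Q -> E c -> E t -> c != 0 -> det3 G != 0 ->
  disc3 (det3 F) (tr_adj F G) (tr_adj G F) (det3 G) != 0 ->
  det3 (pencil F G t) = 0 ->
  bform F b b = 0 -> bform G b b = 0 -> bform Q b b = c -> vec_in b.
Proof.
move=> EF EG EQ Ec Et c0 a0 hdisc ht hF hG hQ.
have [T2 [T3 [ET2 ET3 v2 v1 v0]]] := cubic_other_roots a0 (det3_in EG)
  (tr_adj_in EF EG) (tr_adj_in EG EF) Et (etrans (esym (det_pencil F G t)) ht).
have [n12 n13 n23] : [/\ t != T2, t != T3 & T2 != T3].
  have : (t - T2) * (t - T3) * (T2 - T3) != 0.
    apply: contraNneq hdisc => h.
    by rewrite v0 v1 v2 disc3_vieta h expr0n /= mulr0.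
  by rewrite !mulf_eq0 !subr_eq0 !negb_or => /andP[/andP[-> ->] ->].
have [k1 [k2 [k3 [[Ek1 hk1 g1] [Ek2 hk2 g2] [Ek3 hk3 g3]]]]] :=
  pencil_eigenvectors EF EG Et ET2 ET3 a0 n12 n13 n23 v2 v1 v0.
have [o12 f12] := pencil_kernel_orth hk1 hk2 n12.
have [o13 f13] := pencil_kernel_orth hk1 hk3 n13.
have [o23 f23] := pencil_kernel_orth hk2 hk3 n23.
have hb := orthogonal_expansion b o12 o13 o23 g1 g2 g3.
rewrite hb in hF hG hQ *; rewrite !bform_lin3 o12 o13 o23 f12 f13 f23 in hF hG.
rewrite (pencil_kernel_self hk1) (pencil_kernel_self hk2) (pencil_kernel_self hk3) in hF.
rewrite !mulr0 !addr0 in hF hG.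
set be1 := bform G k1 b / _ in hF hG hQ *; set be2 := bform G k2 b / _ in hF hG hQ *.
set be3 := bform G k3 b / _ in hF hG hQ *.
have hF' : t * (be1 ^+ 2 * bform G k1 k1) + T2 * (be2 ^+ 2 * bform G k2 k2)
    + T3 * (be3 ^+ 2 * bform G k3 k3) = 0 by rewrite -oppr0 -hF; ring.
have [rho [z1 z2 z3]] := two_relations n23 hG hF'.
by apply: (eigen_combination_in EG EQ Ek1 Ek2 Ek3 _ _ _ Ec c0 g1 g2 g3 z1 z2 z3 hQ); rad_close.
Qed.

End PencilInRadicals.

(** The elimination, as formulas in lambda_0..5, x_0..5.  For j = 3, 4, 5 the
    quadruple of points (0, 1, 2, j) carries weights alpha_k (cofactors of a
    Vandermonde matrix times products of the u_k = lambda_k^2) such that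
    sum_k alpha_k u_k x_k^m = 0 for m = 0, 1, 2; they kill A in the four
    equations and leave Q_j(b) = c_j, where Q_j is the Hankel matrix of the
    moments s_j(m) = sum_k alpha_k x_k^m. *)

Section SpectralFormulas.
Variables (T : Type) (o : ring_ops T).
Local Notation "a + b" := (op_add o a b).
Local Notation "a * b" := (op_mul o a b).
Local Notation "- a" := (op_opp o a).
Local Notation "a - b" := (op_add o a (op_opp o b)).
Local Notation "a ^+ n" := (op_exp o a n).

Definition vdm3 a b c := (b - a) * (c - a) * (c - b).

(* sum_k alpha_k f_k over a quadruple of points (u_k, z_k), k < 4 *)
Definition elim_comb (u z f : nat -> T) : T :=
  vdm3 (z 1%N) (z 2%N) (z 3%N) * (u 1%N * u 2%N * u 3%N) * f 0%N
  - vdm3 (z 0%N) (z 2%N) (z 3%N) * (u 0%N * u 2%N * u 3%N) * f 1%N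
  + vdm3 (z 0%N) (z 1%N) (z 3%N) * (u 0%N * u 1%N * u 3%N) * f 2%N
  - vdm3 (z 0%N) (z 1%N) (z 2%N) * (u 0%N * u 1%N * u 2%N) * f 3%N.

Definition hankel_det (s : nat -> T) :=
  gdet o (s 0%N) (s 1%N) (s 2%N) (s 2%N) (s 3%N) (s 4%N).
Definition hankel_tr_adj (s s' : nat -> T) :=
  gtr_adj o (s 0%N) (s 1%N) (s 2%N) (s 2%N) (s 3%N) (s 4%N)
            (s' 0%N) (s' 1%N) (s' 2%N) (s' 2%N) (s' 3%N) (s' 4%N).

Variables lam x : 'I_6 -> T.

(* the k-th point of the quadruple (0, 1, 2, j), with u_k = lambda_k^2 and
   z_k = x_k; inZp rather than inord keeps the witness computation below
   executable *)
Definition quad_pt (j k : nat) : 'I_6 := inZp (if (k < 3)%N then k else j).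
Definition usq j k := lam (quad_pt j k) ^+ 2.
Definition xq j k := x (quad_pt j k).

Definition moment j m := elim_comb (usq j) (xq j) (fun k => xq j k ^+ m).
Definition moment_rhs j := - elim_comb (usq j) (xq j) (fun k => usq j k ^+ 2).

Definition Fmoment m := moment_rhs 4 * moment 3 m - moment_rhs 3 * moment 4 m.
Definition Gmoment m := moment_rhs 5 * moment 3 m - moment_rhs 3 * moment 5 m.

Definition pencil_coef0 := hankel_det Fmoment.
Definition pencil_coef1 := hankel_tr_adj Fmoment Gmoment.
Definition pencil_coef2 := hankel_tr_adj Gmoment Fmoment.
Definition pencil_coef3 := hankel_det Gmoment.

Definition genericity :=
  usq 0 0 * usq 0 1 * usq 0 2 * vdm3 (xq 0 0) (xq 0 1) (xq 0 2)
  * (moment_rhs 3 * pencil_coef3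
     * gdisc o pencil_coef0 pencil_coef1 pencil_coef2 pencil_coef3).

End SpectralFormulas.

Section SpectralFormulasTransfer.
Variables (T T' : Type) (o : ring_ops T) (o' : ring_ops T') (phi : T -> T').
Hypothesis hphi : ops_morph o o' phi.

Ltac push := rewrite ?(morph_add hphi, morph_mul hphi, morph_opp hphi,
  morph_nat hphi, morph_exp hphi).

Lemma morph_vdm3 a b c : phi (vdm3 o a b c) = vdm3 o' (phi a) (phi b) (phi c).
Proof. by rewrite /vdm3; push. Qed.

Lemma morph_elim_comb u z f u' z' f' : (forall k, phi (u k) = u' k) ->
  (forall k, phi (z k) = z' k) -> (forall k, phi (f k) = f' k) ->
  phi (elim_comb o u z f) = elim_comb o' u' z' f'.
Proof. by move=> hu hz hf; rewrite /elim_comb; push; rewrite !hu !hz !hf. Qed.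

Lemma morph_hankel_det s s' : (forall m, phi (s m) = s' m) ->
  phi (hankel_det o s) = hankel_det o' s'.
Proof. by move=> hs; rewrite /hankel_det (morph_gdet hphi) !hs. Qed.

Lemma morph_hankel_tr_adj s s' r r' : (forall m, phi (s m) = s' m) ->
  (forall m, phi (r m) = r' m) -> phi (hankel_tr_adj o s r) = hankel_tr_adj o' s' r'.
Proof. by move=> hs hr; rewrite /hankel_tr_adj (morph_gtr_adj hphi) !hs !hr. Qed.

Variables (lam x : 'I_6 -> T) (lam' x' : 'I_6 -> T').
Hypotheses (hlam : forall i, phi (lam i) = lam' i) (hx : forall i, phi (x i) = x' i).

Lemma morph_usq j k : phi (usq o lam j k) = usq o' lam' j k.
Proof. by rewrite /usq (morph_exp hphi) hlam. Qed.

Lemma morph_moment j m : phi (moment o lam x j m) = moment o' lam' x' j m.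
Proof. by apply: morph_elim_comb => k; rewrite /xq ?morph_usq ?(morph_exp hphi) ?hx. Qed.

Lemma morph_moment_rhs j : phi (moment_rhs o lam x j) = moment_rhs o' lam' x' j.
Proof.
rewrite /moment_rhs (morph_opp hphi); congr (op_opp o' _).
by apply: morph_elim_comb => k; rewrite /xq ?morph_usq ?(morph_exp hphi) ?hx ?hlam.
Qed.

Lemma morph_Fmoment m : phi (Fmoment o lam x m) = Fmoment o' lam' x' m.
Proof.
rewrite /Fmoment (morph_add hphi) (morph_opp hphi) !(morph_mul hphi).
by rewrite !morph_moment !morph_moment_rhs.
Qed.

Lemma morph_Gmoment m : phi (Gmoment o lam x m) = Gmoment o' lam' x' m.
Proof.
rewrite /Gmoment (morph_add hphi) (morph_opp hphi) !(morph_mul hphi).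
by rewrite !morph_moment !morph_moment_rhs.
Qed.

Lemma morph_pencil_coefs :
  [/\ phi (pencil_coef0 o lam x) = pencil_coef0 o' lam' x',
      phi (pencil_coef1 o lam x) = pencil_coef1 o' lam' x',
      phi (pencil_coef2 o lam x) = pencil_coef2 o' lam' x'
    & phi (pencil_coef3 o lam x) = pencil_coef3 o' lam' x'].
Proof.
by split; [apply: morph_hankel_det | apply: morph_hankel_tr_adj
  | apply: morph_hankel_tr_adj | apply: morph_hankel_det] => m;
  rewrite ?morph_Fmoment ?morph_Gmoment.
Qed.

Lemma morph_genericity : phi (genericity o lam x) = genericity o' lam' x'.
Proof.
have [e0 e1 e2 e3] := morph_pencil_coefs.
rewrite /genericity 4!(morph_mul hphi) morph_vdm3 2!(morph_mul hphi) (morph_gdisc hphi).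
by rewrite e0 e1 e2 e3 morph_moment_rhs !morph_usq /xq !hx.
Qed.

End SpectralFormulasTransfer.

Definition hankel (L : Type) (s : nat -> L) : sym3 L :=
  Sym3 (s 0%N) (s 1%N) (s 2%N) (s 2%N) (s 3%N) (s 4%N).

Section Elimination.
Variable L : fieldType.
Local Notation vo := (value_ops L).

Definition quad3 (v : vec3 L) (w : L) := c0 v + w * c1 v + w ^+ 2 * c2 v.

(* Weighting four equations u_k^2 + A(z_k) u_k + B(z_k)^2 = 0 by alpha_k kills A;
   since B(z)^2 is the Hankel form of the moments z^m, what remains is Q(b) = c. *)
Lemma elimination_identity (u z : nat -> L) (a b : vec3 L) :
  (forall k, u k ^+ 2 + quad3 a (z k) * u k + quad3 b (z k) ^+ 2 = 0) ->
  bform (hankel (fun m => elim_comb vo u z (fun k => z k ^+ m))) b b =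
  - elim_comb vo u z (fun k => u k ^+ 2).
Proof.
move=> eqk; apply/eqP; rewrite -subr_eq0; apply/eqP.
transitivity (elim_comb vo u z (fun k => u k ^+ 2 + quad3 a (z k) * u k + quad3 b (z k) ^+ 2)).
  by rewrite /elim_comb /vdm3 /bform /hankel /quad3 /=; ring.
by rewrite /elim_comb /= !eqk; ring.
Qed.

Lemma bform_hankel_comb (r r' : L) (s s' : nat -> L) v :
  bform (hankel (fun m => r * s m - r' * s' m)) v v =
  r * bform (hankel s) v v - r' * bform (hankel s') v v.
Proof. by rewrite /bform /hankel /=; ring. Qed.

Lemma quad3_interpolation (z0 z1 z2 : L) (a : vec3 L) :
  z0 != z1 -> z0 != z2 -> z1 != z2 ->
  let d0 := (z0 - z1) * (z0 - z2) in
  let d1 := (z1 - z0) * (z1 - z2) in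
  let d2 := (z2 - z0) * (z2 - z1) in
  a = Vec3
    (quad3 a z0 * (z1 * z2) / d0 + quad3 a z1 * (z0 * z2) / d1 + quad3 a z2 * (z0 * z1) / d2)
    (- (quad3 a z0 * (z1 + z2) / d0 + quad3 a z1 * (z0 + z2) / d1 + quad3 a z2 * (z0 + z1) / d2))
    (quad3 a z0 / d0 + quad3 a z1 / d1 + quad3 a z2 / d2).
Proof.
move=> n01 n02 n12 d0 d1 d2.
have n10 : z1 != z0 by rewrite eq_sym.
have n20 : z2 != z0 by rewrite eq_sym.
have n21 : z2 != z1 by rewrite eq_sym.
case: a => a0 a1 a2; rewrite /d0 /d1 /d2 /quad3 /=; congr Vec3; field;
  by rewrite ?subr_eq0 ?n01 ?n02 ?n12 ?n10 ?n20 ?n21.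
Qed.

End Elimination.

(* The rational expressions in S form a subring, in which formulas in the
   data evaluate to rational expressions. *)
Section RationalSubring.
Variables (L : fieldType) (S : seq L).

Definition rat_elt := {z : L | rational_in S z}.

Definition rat_ops : ring_ops rat_elt := RingOps
  (fun a b => exist _ _ (RE_add (proj2_sig a) (proj2_sig b)))
  (fun a b => exist _ _ (RE_mul (proj2_sig a) (proj2_sig b)))
  (fun a => exist _ _ (RE_opp (proj2_sig a)))
  (fun n => exist _ _ (rad_nat _ S n))
  (fun a n => exist _ _ (rad_exp n (proj2_sig a))).

Lemma rat_ops_morph : ops_morph rat_ops (value_ops L) (@proj1_sig L _).
Proof. by []. Qed.

End RationalSubring.

Definition var_lam (R : Type) (i : 'I_6) : GRing.term R := GRing.Var R i.
Definition var_x (R : Type) (i : 'I_6) : GRing.term R := GRing.Var R (6 + i).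

Section PointData.
Variables (L : fieldType) (lam x y : 'I_6 -> L).

Lemma lam_in_data i : lam i \in data_seq lam x.
Proof. by rewrite mem_cat map_f ?mem_enum. Qed.

Lemma x_in_data i : x i \in data_seq lam x.
Proof. by rewrite mem_cat orbC map_f ?mem_enum. Qed.

Lemma point_env_lam (i : 'I_6) : (point_env lam x y)`_i = lam i.
Proof.
rewrite /point_env nth_cat size_map size_enum_ord ltn_ord.
by rewrite (nth_map ord0) ?size_enum_ord // nth_ord_enum.
Qed.

Lemma point_env_x (i : 'I_6) : (point_env lam x y)`_(6 + i) = x i.
Proof.
rewrite /point_env nth_cat size_map size_enum_ord ltnNge leq_addr /= addKn.
rewrite nth_cat size_map size_enum_ord ltn_ord.
by rewrite (nth_map ord0) ?size_enum_ord // nth_ord_enum.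
Qed.

End PointData.

Lemma eval_genericity (L : fieldType) (lam x y : 'I_6 -> L) :
  GRing.eval (point_env lam x y) (genericity (term_ops L) (@var_lam L) (@var_x L)) =
  genericity (value_ops L) lam x.
Proof.
have hlam i : GRing.eval (point_env lam x y) (var_lam L i) = lam i := point_env_lam lam x y i.
have hx i : GRing.eval (point_env lam x y) (var_x L i) = x i := point_env_x lam x y i.
exact: (morph_genericity (eval_ops_morph (point_env lam x y)) hlam hx).
Qed.

Lemma genericity_rterm (L : unitRingType) :
  GRing.rterm (genericity (term_ops L) (@var_lam L) (@var_x L)).
Proof. by vm_compute. Qed.

(* An explicit configuration where the genericity polynomial does not
   vanish, checked by computing over Z. *)
Definition witness_lam (i : 'I_6) : Z := Z.of_nat (nth 0 [:: 1; 1; 1; 2; 2; 2] i)%N.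
Definition witness_x (i : 'I_6) : Z := Z.of_nat i.

Lemma witness_generic : genericity (value_ops Z) witness_lam witness_x != 0.
Proof. by vm_compute. Qed.

Lemma char0_intr_eq0 (R : idomainType) (n : int) :
  [pchar R] =i pred0 -> (n%:~R == 0 :> R) = (n == 0).
Proof.
move=> charR; have /pcharf0P char0 := charR.
by case: n => n; rewrite ?NegzE ?intrN ?oppr_eq0 /= char0.
Qed.

(* The image of the witness in L, completed by square roots y_i of P5(x_i),
   is a configuration on the curve where the genericity term does not vanish. *)
Lemma generic_configuration (L : closedFieldType) (P5 : {poly L}) :
  [pchar L] =i pred0 ->
  exists lam0 x0 y0 : 'I_6 -> L, on_curve P5 x0 y0 /\
    GRing.eval (point_env lam0 x0 y0) (genericity (term_ops L) (@var_lam L) (@var_x L)) != 0.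
Proof.
move=> charL; pose f : {rmorphism Z -> L} := intr \o int_of_Z.
have sqrt_ex d : exists r : L, r ^+ 2 == d by have [r <-] := closed_sqrt d; exists r.
pose lam0 i := f (witness_lam i); pose x0 i := f (witness_x i).
exists lam0, x0, (fun i => xchoose (sqrt_ex P5.[x0 i])); split.
  by move=> i; apply/eqP; exact: (xchooseP (sqrt_ex P5.[x0 i])).
have hlam i : f (witness_lam i) = lam0 i by [].
have hx i : f (witness_x i) = x0 i by [].
rewrite eval_genericity -(morph_genericity (rmorph_ops_morph f) hlam hx).
have := witness_generic; set g := genericity _ _ _ => g_neq0.
by rewrite (_ : f g = (int_of_Z g)%:~R) // char0_intr_eq0 // (raddf_eq0 _ (can_inj int_of_ZK)).
Qed.

Section Hamiltonians.
Variables (L : closedFieldType) (lam x : 'I_6 -> L).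
Hypotheses (charL : [pchar L] =i pred0) (generic : genericity (value_ops L) lam x != 0).
Local Notation vo := (value_ops L).
Local Notation S := (data_seq lam x).

Definition Fmat := hankel (Fmoment vo lam x).
Definition Gmat := hankel (Gmoment vo lam x).
Definition Qmat j := hankel (moment vo lam x j).

Definition coefB (H : 'I_6 -> L) := Vec3 (H (inord 0)) (H (inord 1)) (H (inord 2)).
Definition coefA (H : 'I_6 -> L) := Vec3 (H (inord 3)) (H (inord 4)) (H (inord 5)).

Lemma spectralR_quad3 H l z : spectralR H l z =
  (l ^+ 2) ^+ 2 + quad3 (coefA H) z * l ^+ 2 + quad3 (coefB H) z ^+ 2.
Proof. by rewrite /spectralR /quad3 /= -exprM. Qed.

Lemma solution_quadrics H : is_solution lam x H ->
  [/\ bform Fmat (coefB H) (coefB H) = 0, bform Gmat (coefB H) (coefB H) = 0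
    & bform (Qmat 3) (coefB H) (coefB H) = moment_rhs vo lam x 3].
Proof.
move=> hH; set b := coefB H.
have hQ j : bform (Qmat j) b b = moment_rhs vo lam x j.
  apply: (elimination_identity (a := coefA H)) => k.
  by rewrite -[RHS](hH (quad_pt j k)) spectralR_quad3.
have hF : bform Fmat b b = moment_rhs vo lam x 4 * bform (Qmat 3) b b
  - moment_rhs vo lam x 3 * bform (Qmat 4) b b := bform_hankel_comb _ _ _ _ _.
have hG : bform Gmat b b = moment_rhs vo lam x 5 * bform (Qmat 3) b b
  - moment_rhs vo lam x 3 * bform (Qmat 5) b b := bform_hankel_comb _ _ _ _ _.
by rewrite hF hG !hQ; split=> //; ring.
Qed.

Lemma genericity_factors :
  [/\ usq vo lam 0 0 * usq vo lam 0 1 * usq vo lam 0 2 != 0,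
      vdm3 vo (xq x 0 0) (xq x 0 1) (xq x 0 2) != 0,
      moment_rhs vo lam x 3 != 0, det3 Gmat != 0
    & disc3 (det3 Fmat) (tr_adj Fmat Gmat) (tr_adj Gmat Fmat) (det3 Gmat) != 0].
Proof.
move: generic; rewrite /genericity !mulf_eq0 !negb_or.
by move=> /andP[/andP[-> ->] /andP[/andP[-> ->] ->]].
Qed.

(* The data-level quantities are rational in the data, being formulas
   evaluated in the rational subring. *)
Definition lam_r i : rat_elt S := exist _ (lam i) (RE_gen _ (lam_in_data lam x i)).
Definition x_r i : rat_elt S := exist _ (x i) (RE_gen _ (x_in_data lam x i)).

Lemma rational_formulas :
  [/\ forall m, rational_in S (Fmoment vo lam x m),
      forall m, rational_in S (Gmoment vo lam x m),
      forall m, rational_in S (moment vo lam x 3 m),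
      rational_in S (moment_rhs vo lam x 3)
    & [/\ rational_in S (det3 Fmat), rational_in S (tr_adj Fmat Gmat),
          rational_in S (tr_adj Gmat Fmat) & rational_in S (det3 Gmat)]].
Proof.
have hlam i : proj1_sig (lam_r i) = lam i by [].
have hx i : proj1_sig (x_r i) = x i by [].
have hm := rat_ops_morph S.
split=> [m|m|m||].
- by rewrite -(morph_Fmoment hm hlam hx); exact: proj2_sig.
- by rewrite -(morph_Gmoment hm hlam hx); exact: proj2_sig.
- by rewrite -(morph_moment hm hlam hx); exact: proj2_sig.
- by rewrite -(morph_moment_rhs hm hlam hx); exact: proj2_sig.
have [e0 e1 e2 e3] := morph_pencil_coefs hm hlam hx.
split.
- by have := proj2_sig (pencil_coef0 (rat_ops S) lam_r x_r); rewrite e0.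
- by have := proj2_sig (pencil_coef1 (rat_ops S) lam_r x_r); rewrite e1.
- by have := proj2_sig (pencil_coef2 (rat_ops S) lam_r x_r); rewrite e2.
- by have := proj2_sig (pencil_coef3 (rat_ops S) lam_r x_r); rewrite e3.
Qed.

Section SqrtClosure.
Variable t : L.
Hypothesis ht : det3 (pencil Fmat Gmat t) = 0.
Local Notation E := (sqrt_expr_in (t :: S)).

Lemma rational_sqrt_in z : rational_in S z -> E z.
Proof. by move=> hz; apply: (rad_mono _ _ hz) => // w hw; rewrite inE hw orbT. Qed.

Lemma lam_sqrt_in i : E (lam i).
Proof. by apply: rational_sqrt_in; apply: RE_gen; exact: lam_in_data. Qed.

Lemma x_sqrt_in i : E (x i).
Proof. by apply: rational_sqrt_in; apply: RE_gen; exact: x_in_data. Qed.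

Lemma coefB_in H : is_solution lam x H -> vec_in (fun n => n == 2)%N (t :: S) (coefB H).
Proof.
move=> hH; have [_ _ hc3 ha hdisc] := genericity_factors.
have [ratF ratG ratQ ratc3 _] := rational_formulas.
have hankel_in s : (forall m, rational_in S (s m)) ->
    sym_in (fun n => n == 2)%N (t :: S) (hankel s).
  by move=> hs; do !split; apply: rational_sqrt_in; apply: hs.
have Et : E t by apply: RE_gen; rewrite mem_head.
have [hF hG hQ] := solution_quadrics hH.
exact: (common_null_vector_in _ (@char0_natr_neq0 _ 2 charL isT) (hankel_in _ ratF)
  (hankel_in _ ratG) (hankel_in _ ratQ) (rational_sqrt_in ratc3) Et hc3 ha hdisc ht hF hG hQ).
Qed.

(* The equation at x_k, k < 3, gives A(x_k) = -(u_k^2 + B(x_k)^2) / u_k. *)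
Lemma coefA_node_in H k : is_solution lam x H -> (k < 3)%N ->
  E (quad3 (coefA H) (xq x 0 k)).
Proof.
move=> hH hk; have [hu _ _ _ _] := genericity_factors.
have [EB0 EB1 EB2] := coefB_in hH.
have u0 : usq vo lam 0 k != 0.
  by case: k hk => [|[|[|]]] // _; apply: contraNneq hu => ->; rewrite ?(mul0r, mulr0).
set u := usq vo lam 0 k in u0 *.
rewrite (_ : quad3 _ _ = - (u ^+ 2 + quad3 (coefB H) (xq x 0 k) ^+ 2) / u).
  have El := lam_sqrt_in (quad_pt 0 k); have Ex := x_sqrt_in (quad_pt 0 k).
  by rewrite /u /usq /quad3 /xq /=; rad_close.
have := hH (quad_pt 0 k); rewrite spectralR_quad3 -/(xq x 0 k) => eq0.
apply: (mulIf u0); rewrite divfK //; apply/eqP; rewrite -subr_eq0 -eq0.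
by apply/eqP; rewrite /u /usq /=; ring.
Qed.

(* A is then obtained by interpolation at the distinct nodes x_0, x_1, x_2. *)
Lemma solution_in_sqrt_closure H : is_solution lam x H -> forall k, E (H k).
Proof.
move=> hH; have [_ hV _ _ _] := genericity_factors.
have [EB0 EB1 EB2] := coefB_in hH.
move: hV; rewrite /vdm3 /= !mulf_eq0 !subr_eq0 !negb_or => /andP[/andP[n10 n20] n21].
rewrite eq_sym in n10; rewrite eq_sym in n20; rewrite eq_sym in n21.
have EA0 := coefA_node_in hH (isT : 0 < 3)%N; have EA1 := coefA_node_in hH (isT : 1 < 3)%N.
have EA2 := coefA_node_in hH (isT : 2 < 3)%N.
have Ex0 := x_sqrt_in (quad_pt 0 0); have Ex1 := x_sqrt_in (quad_pt 0 1).
have Ex2 := x_sqrt_in (quad_pt 0 2).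
have [EA3 EA4 EA5] : vec_in (fun n => n == 2)%N (t :: S) (coefA H).
  by rewrite (quad3_interpolation (coefA H) n10 n20 n21) /vec_in /=; split; rad_close.
by move=> k; rewrite -(inord_val k); case: k => [[|[|[|[|[|[|m]]]]]] hm].
Qed.

End SqrtClosure.

(* The degree-4 equation: X times the cubic det (F + s G). *)
Definition resolvent : {poly L} :=
  Poly [:: 0; det3 Fmat; tr_adj Fmat Gmat; tr_adj Gmat Fmat; det3 Gmat].

Lemma resolvent_size : size resolvent = 5%N.
Proof. by rewrite /resolvent (@PolyK _ 0) //; have [_ _ _ ha _] := genericity_factors. Qed.

Lemma resolvent_root t : det3 (pencil Fmat Gmat t) = 0 -> root resolvent t.
Proof.
move=> ht; rewrite /resolvent /root horner_Poly; cbv beta iota delta [horner_rec].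
apply/eqP; transitivity (t * det3 (pencil Fmat Gmat t)); last by rewrite ht mulr0.
by rewrite det_pencil; ring.
Qed.

Lemma cubic_root_exists : exists t, det3 (pencil Fmat Gmat t) = 0.
Proof.
have [_ _ _ ha _] := genericity_factors.
have /closed_rootP [t] :
    size (Poly [:: det3 Fmat; tr_adj Fmat Gmat; tr_adj Gmat Fmat; det3 Gmat]) != 1%N.
  by rewrite (@PolyK _ 0).
rewrite /root horner_Poly; cbv beta iota delta [horner_rec] => /eqP ht.
by exists t; rewrite -ht det_pencil; ring.
Qed.

(* The two conclusions of the theorem for a generic configuration; for the
   second, the root t of the cubic is itself a radical by Cardano. *)
Lemma hamiltonians_by_radicals :
  (exists p : {poly L}, size p = 5%N /\ (forall k, rational_in S p`_k) /\
     forall H, is_solution lam x H ->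
       exists t, root p t /\ forall k, sqrt_expr_in (t :: S) (H k)) /\
  (forall H, is_solution lam x H -> forall k, radical_in S (H k)).
Proof.
have [t ht] := cubic_root_exists.
have [_ _ _ ha _] := genericity_factors.
have [_ _ _ _ [ra0 ra1 ra2 ra3]] := rational_formulas.
split.
  exists resolvent; split; first exact: resolvent_size.
  split=> [k|H hH].
    rewrite /resolvent (@PolyK _ 0) //.
    case: k => [|[|[|[|[|k]]]]]; [exact: rad0 | exact: ra0 | exact: ra1 | exact: ra2
      | exact: ra3 | by rewrite nth_default //; exact: rad0].
  by exists t; split; [exact: resolvent_root | exact: (solution_in_sqrt_closure ht)].
move=> H hH k.
have to_rad z : rational_in S z -> radical_in S z by apply: rad_mono.
have rt : radical_in S t.
  apply: (cubic_radical charL ha (to_rad _ ra3) (to_rad _ ra2) (to_rad _ ra1) (to_rad _ ra0)).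
  by rewrite -ht det_pencil; ring.
apply: (rad_subst rt); apply: (rad_mono _ _ (solution_in_sqrt_closure ht hH k)) => // n /eqP -> //.
Qed.

End Hamiltonians.

Theorem proposition1 (L : closedFieldType) (charL : [pchar L] =i pred0)
    (P5 : {poly L}) (hP5 : size P5 = 6%N) :
  exists D : GRing.term L,
    GRing.rterm D /\
    (exists lam0 x0 y0 : 'I_6 -> L,
        on_curve P5 x0 y0 /\ GRing.eval (point_env lam0 x0 y0) D != 0) /\
    forall lam x y : 'I_6 -> L,
      on_curve P5 x y ->
      GRing.eval (point_env lam x y) D != 0 ->
      (exists p : {poly L},
          size p = 5%N /\
          (forall k : nat, rational_in (data_seq lam x) p`_k) /\
          forall H : 'I_6 -> L, is_solution lam x H ->
            exists t : L, root p t /\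
              forall k : 'I_6, sqrt_expr_in (t :: data_seq lam x) (H k)) /\
      (forall H : 'I_6 -> L, is_solution lam x H ->
          forall k : 'I_6, radical_in (data_seq lam x) (H k)).
Proof.
exists (genericity (term_ops L) (@var_lam L) (@var_x L)).
split; first exact: genericity_rterm.
split; first exact: generic_configuration.
move=> lam x y _; rewrite eval_genericity => generic.
exact: hamiltonians_by_radicals.
Qed.
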